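(* Let $n\in\mathbb{N}$, $H\in\mathbb{R}^{n\times n}$, $W\succ 0$ in $\mathbb{R}^{n\times n}$, and $C=\mathrm{diag}(C_{11},\dots,C_{nn})$ diagonal with all $C_{ii}\ne 0$; assume $(H,C)$ observable and $(H,D)$ controllable where $W=DD^T$. Let $\Delta>0$ (the $\ell_2$-sensitivity $\Delta_{\ell_2}y$), let $\delta\in[10^{-5},10^{-1}]$, let $\epsilon>0$, and set $$\sigma=\frac{\Delta}{2\epsilon}\Big(K_\delta+\sqrt{K_\delta^2+2\epsilon}\Big),\qquad K_\delta:=\mathcal Q^{-1}(\delta),$$ and $V=\sigma^2 I_n$. Let $\Sigma$ be the unique positive semidefinite solution of $\Sigma = H\Sigma H^T - H\Sigma C^T(C\Sigma C^T+V)^{-1}C\Sigma H^T + W$ and $\overline\Sigma:=(C^TV^{-1}C+\Sigma^{-1})^{-1}$. Let $B_l,B_u$ satisfy $0<B_l<n\,\lambda_n(W)$ and $B_u>0$, and define $$\eta_2:=\left(\frac{B_l\,C_u^2}{\Delta^2\big(n-B_l\lambda_n(W)^{-1}\big)}\right)^{1/2},\qquad \eta_4:=\left(\frac{B_u\,C_l^2}{n\,\Delta^2}\right)^{1/2}.$$ If $$\frac18\left(\frac{1+\sqrt{36\eta_4+1}}{\eta_4}\right)^2\le\epsilon,$$ then $\mathrm{tr}\,\overline\Sigma\le B_u$; and if $\epsilon\le 1/\eta_2$, then $\mathrm{tr}\,\overline\Sigma\ge B_l$. In particular, if both inequalities on $\epsilon$ hold, then $B_l\le\mathrm{tr}\,\overline\Sigma\le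 B_u$.
   Context: $\mathcal Q(y)=\frac{1}{\sqrt{2\pi}}\int_y^\infty e^{-z^2/2}\,dz$ is the Gaussian tail function and $\mathcal Q^{-1}$ its inverse. The noise level $\sigma$ is the Gaussian-mechanism noise giving $(\epsilon,\delta)$-differential privacy of the state trajectory when $\Delta$ is the sensitivity $\Delta_{\ell_2}y=\sup\{\|Cx-Cx'\|_{\ell_2}:\|x-x'\|_{\ell_2}\le B\}$; for the claim, $\Delta$ may be any positive constant. $\mathrm{tr}\,\overline\Sigma$ is the steady-state mean squared a posteriori (estimation) error of the Kalman filter. $\lambda_n(W)$ is the smallest eigenvalue of $W$. $C_l:=C_{ll}$ with $l=\arg\min_i C_{ii}^2$ and $C_u:=C_{uu}$ with $u=\arg\max_i C_{ii}^2$. *)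

(* classical reals (Reals), hand-rolled finite-dimensional
   real matrices represented as functions nat -> nat -> R, only the entries
   with indices below the stated dimensions being meaningful. *)
From Stdlib Require Import Reals Lra List.
Open Scope R_scope.

Definition Mat := nat -> nat -> R.
Definition Vec := nat -> R.

Definition sumR (n : nat) (f : nat -> R) : R :=
  fold_right (fun i acc => f i + acc) 0 (seq 0 n).

Definition mmul (k : nat) (A B : Mat) : Mat :=
  fun i j => sumR k (fun l => A i l * B l j).
Definition mvec (k : nat) (A : Mat) (v : Vec) : Vec :=
  fun i => sumR k (fun l => A i l * v l).
Definition trm (A : Mat) : Mat := fun i j => A j i.
Definition madd (A B : Mat) : Mat := fun i j => A i j + B i j.
Definition msub (A B : Mat) : Mat := fun i j => A i j - B i j.
Definition mscale (a : R) (A : Mat) : Mat := fun i j => a * A i j.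
Definition idm : Mat := fun i j => if Nat.eqb i j then 1 else 0.
Definition trace (n : nat) (A : Mat) : R := sumR n (fun i => A i i).

Fixpoint mpow (n : nat) (H : Mat) (k : nat) : Mat :=
  match k with
  | O => idm
  | S k' => mmul n H (mpow n H k')
  end.

Definition meq (p q : nat) (A B : Mat) : Prop :=
  forall i j, (i < p)%nat -> (j < q)%nat -> A i j = B i j.

Definition is_inv (n : nat) (A Ainv : Mat) : Prop :=
  meq n n (mmul n A Ainv) idm /\ meq n n (mmul n Ainv A) idm.

Definition nonzero_vec (n : nat) (v : Vec) : Prop :=
  exists i, (i < n)%nat /\ v i <> 0.

Definition symmetric (n : nat) (A : Mat) : Prop := meq n n A (trm A).

Definition quad (n : nat) (A : Mat) (x : Vec) : R :=
  sumR n (fun i => x i * mvec n A x i).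

Definition psd (n : nat) (A : Mat) : Prop :=
  symmetric n A /\ forall x : Vec, 0 <= quad n A x.
Definition pd (n : nat) (A : Mat) : Prop :=
  symmetric n A /\ forall x : Vec, nonzero_vec n x -> 0 < quad n A x.

Definition is_eigenvalue (n : nat) (A : Mat) (mu : R) : Prop :=
  exists v : Vec, nonzero_vec n v /\ forall i, (i < n)%nat -> mvec n A v i = mu * v i.

Definition is_min_eigenvalue (n : nat) (A : Mat) (lam : R) : Prop :=
  is_eigenvalue n A lam /\ forall mu, is_eigenvalue n A mu -> lam <= mu.

Definition diagonal (n : nat) (C : Mat) : Prop :=
  forall i j, (i < n)%nat -> (j < n)%nat -> i <> j -> C i j = 0.

(* (H, C) observable (H n x n, C p x n): the observability matrix
   [C; CH; ...; CH^(n-1)] has trivial kernel, i.e. rank n. *)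
Definition observable (n p : nat) (H C : Mat) : Prop :=
  forall v : Vec,
    (forall k i, (k < n)%nat -> (i < p)%nat -> mvec n (mmul n C (mpow n H k)) v i = 0) ->
    forall i, (i < n)%nat -> v i = 0.

(* (H, D) controllable (H n x n, D n x m): the controllability matrix
   [D, HD, ..., H^(n-1) D] has full row rank n (trivial left kernel). *)
Definition controllable (n m : nat) (H D : Mat) : Prop :=
  forall w : Vec,
    (forall k j, (k < n)%nat -> (j < m)%nat ->
        sumR n (fun i => w i * mmul n (mpow n H k) D i j) = 0) ->
    forall i, (i < n)%nat -> w i = 0.

(* Gaussian density and tail function.  Qtail y q  means  Q(y) = q, i.e.
   lim_{b -> +oo} int_y^b phi = q  (improper Riemann integral). *)
Definition gauss_pdf (z : R) : R := / sqrt (2 * PI) * exp (- z ^ 2 / 2).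

Definition Qtail (y q : R) : Prop :=
  forall eps, 0 < eps -> exists B, forall b (pr : Riemann_integrable gauss_pdf y b),
      B <= b -> Rabs (RiemannInt pr - q) < eps.

Definition riccati_solution (n : nat) (H C V W Sigma : Mat) : Prop :=
  exists M : Mat,
    is_inv n (madd (mmul n (mmul n C Sigma) (trm C)) V) M /\
    meq n n Sigma
      (madd (msub (mmul n (mmul n H Sigma) (trm H))
                  (mmul n (mmul n (mmul n (mmul n (mmul n H Sigma) (trm C)) M) C) (mmul n Sigma (trm H))))
            W).

(* Write a_i = C_ii^2 / sigma^2, so that C^T V^{-1} C = diag(a) and
   Sigmabar = (diag(a) + Sigma^{-1})^{-1}.  The proof has four ingredients.
   1. Riccati: the Riccati equation gives Sigma - W = H (Sigma - Sigma C^T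
      (C Sigma C^T + V)^{-1} C Sigma) H^T, which is positive semidefinite, so
      Sigma >= W >= lambda_n(W) I (the second step is the Rayleigh bound, whose
      proof needs the dichotomy "invertible or singular" for square matrices,
      taken from MathComp's determinant theory).
   2. Linear algebra: for a >= 0 and S positive semidefinite, the diagonal of
      X = (diag(a) + S)^{-1} satisfies 1/(a_j + S_jj) <= X_jj <= 1/a_j; with
      S = Sigma^{-1} and Sigma >= lambda I, also S_jj <= 1/lambda.
   3. Gaussian numerics: 1e-5 <= delta <= 1e-1 forces 1 <= Q^{-1}(delta) <= 9/2.
   4. Scalar algebra: under the two conditions on epsilon, sigma^2 <= Bu Cl^2 / n
      resp. n / (Cu^2/sigma^2 + 1/lambda) >= Bl.
   Summing the diagonal bounds of 2 and using 4 gives the two trace bounds. *)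

From Stdlib Require Import Reals Lra Lia List FunctionalExtensionality.
From Coquelicot Require Import Coquelicot.
From HB Require structures.
From mathcomp Require all_boot all_order all_algebra Rstruct.
Open Scope R_scope.

(** * Finite sums *)

Lemma fold_sum_init (f : nat -> R) (l : list nat) (x : R) :
  fold_right (fun i acc => f i + acc) x l = fold_right (fun i acc => f i + acc) 0 l + x.
Proof. induction l as [|a l IH]; simpl; [lra | rewrite IH; lra]. Qed.

Lemma sumR_S (n : nat) (f : nat -> R) : sumR (S n) f = sumR n f + f n.
Proof.
  unfold sumR. rewrite seq_S, fold_right_app. simpl.
  rewrite fold_sum_init. lra.
Qed.

Lemma sumR_ext (n : nat) (f g : nat -> R) :
  (forall i, (i < n)%nat -> f i = g i) -> sumR n f = sumR n g.
Proof.
  induction n as [|n IH]; intros Hfg; [reflexivity|].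
  rewrite !sumR_S, IH, Hfg; auto; intros; apply Hfg; lia.
Qed.

Lemma sumR_plus (n : nat) (f g : nat -> R) :
  sumR n (fun i => f i + g i) = sumR n f + sumR n g.
Proof. induction n as [|n IH]; [cbn; lra | rewrite !sumR_S, IH; lra]. Qed.

Lemma sumR_scal (n : nat) (c : R) (f : nat -> R) :
  sumR n (fun i => c * f i) = c * sumR n f.
Proof. induction n as [|n IH]; [cbn; lra | rewrite !sumR_S, IH; lra]. Qed.

Lemma sumR_opp (n : nat) (f : nat -> R) : sumR n (fun i => - f i) = - sumR n f.
Proof. induction n as [|n IH]; [cbn; lra | rewrite !sumR_S, IH; lra]. Qed.

Lemma sumR_const (n : nat) (c : R) : sumR n (fun _ => c) = INR n * c.
Proof. induction n as [|n IH]; [cbn; lra | rewrite sumR_S, IH, S_INR; lra]. Qed.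

Lemma sumR_le (n : nat) (f g : nat -> R) :
  (forall i, (i < n)%nat -> f i <= g i) -> sumR n f <= sumR n g.
Proof.
  induction n as [|n IH]; intros Hfg; [cbn; lra|].
  rewrite !sumR_S. assert (sumR n f <= sumR n g) by (apply IH; intros; apply Hfg; lia).
  assert (f n <= g n) by (apply Hfg; lia). lra.
Qed.

Lemma sumR_nonneg (n : nat) (f : nat -> R) :
  (forall i, (i < n)%nat -> 0 <= f i) -> 0 <= sumR n f.
Proof.
  intros Hf. replace 0 with (sumR n (fun _ => 0)) by (rewrite sumR_const; ring).
  now apply sumR_le.
Qed.

Lemma sumR_single_le (n : nat) (f : nat -> R) (j : nat) :
  (forall i, (i < n)%nat -> 0 <= f i) -> (j < n)%nat -> f j <= sumR n f.
Proof.
  induction n as [|n IH]; intros Hf hj; [lia|].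
  rewrite sumR_S. destruct (Nat.eq_dec j n) as [->|ne].
  - assert (0 <= sumR n f) by (apply sumR_nonneg; intros; apply Hf; lia). lra.
  - assert (f j <= sumR n f) by (apply IH; [intros; apply Hf; lia | lia]).
    assert (0 <= f n) by (apply Hf; lia). lra.
Qed.

Lemma sumR_swap (n m : nat) (f : nat -> nat -> R) :
  sumR n (fun i => sumR m (fun j => f i j)) = sumR m (fun j => sumR n (fun i => f i j)).
Proof.
  induction n as [|n IH].
  - cbn. rewrite sumR_const. ring.
  - rewrite sumR_S, IH, <- sumR_plus. apply sumR_ext. intros. now rewrite sumR_S.
Qed.

Lemma sumR_delta_l (n j : nat) (f : nat -> R) :
  (j < n)%nat -> sumR n (fun i => idm i j * f i) = f j.
Proof.
  induction n as [|n IH]; intros hj; [lia|].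
  rewrite sumR_S. unfold idm at 2. destruct (Nat.eqb_spec n j) as [->|ne].
  - rewrite (sumR_ext _ _ (fun _ => 0)), sumR_const; [ring|].
    intros i hi. unfold idm. destruct (Nat.eqb_spec i j); [lia | ring].
  - rewrite IH by lia. ring.
Qed.

Lemma sumR_delta_r (n j : nat) (f : nat -> R) :
  (j < n)%nat -> sumR n (fun i => f i * idm i j) = f j.
Proof. intros hj. rewrite <- (sumR_delta_l n j f hj). apply sumR_ext. intros; ring. Qed.

Lemma Rabs_sumR (n : nat) (f : nat -> R) : Rabs (sumR n f) <= sumR n (fun i => Rabs (f i)).
Proof.
  induction n as [|n IH]; [cbn; rewrite Rabs_R0; lra|].
  rewrite !sumR_S. eapply Rle_trans; [apply Rabs_triang | lra].
Qed.

(** * Vectors, matrices and quadratic forms *)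

Definition dot (n : nat) (x y : Vec) : R := sumR n (fun i => x i * y i).

Definition ev (j : nat) : Vec := fun i => idm i j.

Lemma idm_sym (i j : nat) : idm i j = idm j i.
Proof. unfold idm. now rewrite Nat.eqb_sym. Qed.

Lemma mvec_mmul (n : nat) (A B : Mat) (v : Vec) :
  mvec n (mmul n A B) v = mvec n A (mvec n B v).
Proof.
  apply functional_extensionality. intro i. unfold mvec, mmul.
  rewrite (sumR_ext n _ (fun l => sumR n (fun k => A i k * B k l * v l))).
  2:{ intros l _. rewrite Rmult_comm, <- sumR_scal. apply sumR_ext. intros; ring. }
  rewrite sumR_swap. apply sumR_ext. intros k _. rewrite <- sumR_scal.
  apply sumR_ext. intros; ring.
Qed.

Lemma dot_trm (n : nat) (z : Vec) (A : Mat) (v : Vec) :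
  dot n z (mvec n A v) = dot n (mvec n (trm A) z) v.
Proof.
  unfold dot, mvec, trm.
  rewrite (sumR_ext n _ (fun i => sumR n (fun l => z i * A i l * v l))).
  2:{ intros. rewrite <- sumR_scal. apply sumR_ext. intros; ring. }
  rewrite sumR_swap. apply sumR_ext. intros l _.
  rewrite Rmult_comm, <- sumR_scal. apply sumR_ext. intros; ring.
Qed.

Lemma dot_comm (n : nat) (x y : Vec) : dot n x y = dot n y x.
Proof. unfold dot. apply sumR_ext. intros; ring. Qed.

Lemma dot_ext (n : nat) (x x' y y' : Vec) :
  (forall i, (i < n)%nat -> x i = x' i) -> (forall i, (i < n)%nat -> y i = y' i) ->
  dot n x y = dot n x' y'.
Proof. intros h1 h2. unfold dot. apply sumR_ext. intros. rewrite h1, h2; auto. Qed.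

Lemma mvec_ext (n : nat) (A A' : Mat) (v v' : Vec) :
  meq n n A A' -> (forall i, (i < n)%nat -> v i = v' i) ->
  forall i, (i < n)%nat -> mvec n A v i = mvec n A' v' i.
Proof. intros h1 h2 i hi. unfold mvec. apply sumR_ext. intros. rewrite h1, h2; auto. Qed.

Lemma mvec_lin (n : nat) (A : Mat) (x y : Vec) (c : R) (i : nat) :
  mvec n A (fun k => x k + c * y k) i = mvec n A x i + c * mvec n A y i.
Proof. unfold mvec. rewrite <- sumR_scal, <- sumR_plus. apply sumR_ext. intros; ring. Qed.

Lemma dot_lin_l (n : nat) (x y z : Vec) (c : R) :
  dot n (fun k => x k + c * y k) z = dot n x z + c * dot n y z.
Proof. unfold dot. rewrite <- sumR_scal, <- sumR_plus. apply sumR_ext. intros; ring. Qed.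

Lemma dot_lin_r (n : nat) (x y z : Vec) (c : R) :
  dot n z (fun k => x k + c * y k) = dot n z x + c * dot n z y.
Proof. unfold dot. rewrite <- sumR_scal, <- sumR_plus. apply sumR_ext. intros; ring. Qed.

Lemma mvec_madd (n : nat) (A B : Mat) (x : Vec) (i : nat) :
  mvec n (madd A B) x i = mvec n A x i + mvec n B x i.
Proof. unfold mvec, madd. rewrite <- sumR_plus. apply sumR_ext. intros; ring. Qed.

Lemma mvec_msub (n : nat) (A B : Mat) (x : Vec) (i : nat) :
  mvec n (msub A B) x i = mvec n A x i - mvec n B x i.
Proof.
  unfold mvec, msub.
  rewrite (sumR_ext n _ (fun l => A i l * x l + - (B i l * x l))) by (intros; ring).
  rewrite sumR_plus, sumR_opp. ring.
Qed.

Lemma mvec_scal_idm (n : nat) (c : R) (x : Vec) (i : nat) :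
  (i < n)%nat -> mvec n (mscale c idm) x i = c * x i.
Proof.
  intros hi. unfold mvec, mscale. rewrite <- (sumR_delta_l n i x hi), <- sumR_scal.
  apply sumR_ext. intros. rewrite idm_sym. ring.
Qed.

Lemma mvec_idm (n : nat) (x : Vec) (i : nat) : (i < n)%nat -> mvec n idm x i = x i.
Proof.
  intros hi. rewrite <- (Rmult_1_l (x i)), <- (mvec_scal_idm n 1 x i hi).
  unfold mvec, mscale. apply sumR_ext. intros; ring.
Qed.

Lemma mvec_ev (n : nat) (A : Mat) (j i : nat) : (j < n)%nat -> mvec n A (ev j) i = A i j.
Proof. intros hj. apply sumR_delta_r. auto. Qed.

Lemma dot_ev_l (n j : nat) (y : Vec) : (j < n)%nat -> dot n (ev j) y = y j.
Proof. intros hj. apply sumR_delta_l; auto. Qed.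

Lemma dot_ev_r (n j : nat) (y : Vec) : (j < n)%nat -> dot n y (ev j) = y j.
Proof. intros hj. apply sumR_delta_r; auto. Qed.

Lemma ev_diag (j : nat) : ev j j = 1.
Proof. unfold ev, idm. now rewrite Nat.eqb_refl. Qed.

Lemma inv_col (n : nat) (A B : Mat) (j i : nat) :
  meq n n (mmul n A B) idm -> (i < n)%nat -> (j < n)%nat ->
  mvec n A (mvec n B (ev j)) i = ev j i.
Proof. intros h hi hj. rewrite <- mvec_mmul, mvec_ev by auto. apply h; auto. Qed.

Lemma sym_trm (n : nat) (S : Mat) (x : Vec) (i : nat) :
  symmetric n S -> (i < n)%nat -> mvec n (trm S) x i = mvec n S x i.
Proof. intros hs hi. unfold mvec. apply sumR_ext. intros l hl. unfold trm. rewrite (hs i l); auto. Qed.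

Lemma dot_sym (n : nat) (S : Mat) (x y : Vec) :
  symmetric n S -> dot n x (mvec n S y) = dot n (mvec n S x) y.
Proof. intros hs. rewrite dot_trm. apply dot_ext; auto. intros; now apply sym_trm. Qed.

Lemma quad_dot (n : nat) (A : Mat) (x : Vec) : quad n A x = dot n x (mvec n A x).
Proof. reflexivity. Qed.

Lemma dot_nonneg (n : nat) (x : Vec) : 0 <= dot n x x.
Proof. apply sumR_nonneg. intros; apply Rle_0_sqr. Qed.

Lemma sq_le_dot (n : nat) (x : Vec) (i : nat) : (i < n)%nat -> x i * x i <= dot n x x.
Proof. intros hi. apply (sumR_single_le n (fun k => x k * x k)); auto. intros; apply Rle_0_sqr. Qed.

Lemma quad_inv (n : nat) (S Sinv : Mat) (x : Vec) :
  meq n n (mmul n S Sinv) idm -> quad n Sinv x = quad n S (mvec n Sinv x).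
Proof.
  intros h. rewrite !quad_dot, dot_comm. apply dot_ext; auto.
  intros i hi. rewrite <- mvec_mmul, (mvec_ext n _ idm x x h), mvec_idm; auto.
Qed.

Lemma sym_inv (n : nat) (S Sinv : Mat) :
  symmetric n S -> meq n n (mmul n S Sinv) idm -> symmetric n Sinv.
Proof.
  intros hs h i j hi hj. unfold trm.
  set (a := mvec n Sinv (ev i)). set (b := mvec n Sinv (ev j)).
  rewrite <- (mvec_ev n Sinv j i hj), <- (mvec_ev n Sinv i j hi). fold a b.
  rewrite <- (dot_ev_l n i b hi), <- (dot_ev_r n j a hj).
  rewrite (dot_ext n (ev i) (mvec n S a) b b), (dot_ext n a a (ev j) (mvec n S b)); auto.
  - now rewrite dot_sym.
  - intros; symmetry; now apply inv_col.
  - intros; symmetry; now apply inv_col.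
Qed.

(** * The Riccati solution dominates the process noise *)

Lemma riccati_quad_expansion (n : nat) (H C V W Sg M : Mat) (z : Vec) :
  symmetric n Sg ->
  meq n n Sg
    (madd (msub (mmul n (mmul n H Sg) (trm H))
                (mmul n (mmul n (mmul n (mmul n (mmul n H Sg) (trm C)) M) C) (mmul n Sg (trm H))))
          W) ->
  let u := mvec n (trm H) z in
  let w := mvec n C (mvec n Sg u) in
  quad n Sg z = dot n u (mvec n Sg u) - dot n w (mvec n M w) + quad n W z.
Proof.
  intros hsym hric u w. rewrite !quad_dot.
  rewrite (dot_ext n z z (mvec n Sg z)
     (fun i => mvec n (mmul n (mmul n H Sg) (trm H)) z i
               + (-1) * mvec n (mmul n (mmul n (mmul n (mmul n (mmul n H Sg) (trm C)) M) C)
                                     (mmul n Sg (trm H))) z i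
               + 1 * mvec n W z i)); auto.
  2:{ intros i hi. rewrite (mvec_ext n _ _ z z hric), mvec_madd, mvec_msub; auto. ring. }
  rewrite !dot_lin_r, !mvec_mmul, !(dot_trm n z H). fold u. fold w.
  replace (dot n u (mvec n Sg (mvec n (trm C) (mvec n M w)))) with (dot n w (mvec n M w)).
  - ring.
  - symmetry. rewrite (dot_sym n Sg), dot_trm by auto. reflexivity.
Qed.

(* Sigma - W = H (Sigma - Sigma C^T M C Sigma) H^T is positive semidefinite,
   because the gain equation M (C Sigma C^T + s2 I) = I with s2 >= 0 makes
   the subtracted term no larger than Sigma on the relevant vectors. *)
Lemma riccati_dominates_noise (n : nat) (H C V W Sg : Mat) (s2 : R) :
  psd n Sg -> V = mscale s2 idm -> 0 <= s2 ->
  riccati_solution n H C V W Sg -> forall z, quad n W z <= quad n Sg z.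
Proof.
  intros [hsym hpsd] hV hs2 [M [[hinv _] hric]] z.
  rewrite (riccati_quad_expansion n H C V W Sg M z hsym hric).
  set (u := mvec n (trm H) z). set (w := mvec n C (mvec n Sg u)).
  set (t := mvec n M w). set (s := mvec n (trm C) t).
  assert (gain : forall i, (i < n)%nat -> mvec n C (mvec n Sg s) i + s2 * t i = w i).
  { intros i hi. unfold t. rewrite <- (mvec_idm n w i hi), <- (mvec_ext n _ _ w w hinv); auto.
    rewrite mvec_mmul, mvec_madd, hV, mvec_scal_idm, !mvec_mmul by auto. reflexivity. }
  assert (Etw : dot n t w = dot n s (mvec n Sg s) + s2 * dot n t t).
  { rewrite (dot_ext n t t w (fun i => mvec n C (mvec n Sg s) i + s2 * t i)); auto.
    - now rewrite dot_lin_r, dot_trm.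
    - intros; now rewrite gain. }
  assert (Esu : dot n s (mvec n Sg u) = dot n w t) by (unfold s; now rewrite dot_comm, dot_trm).
  assert (Eus : dot n u (mvec n Sg s) = dot n s (mvec n Sg u)) by (now rewrite dot_sym, dot_comm).
  assert (Hpsd := hpsd (fun k => u k + (-1) * s k)). rewrite quad_dot in Hpsd.
  replace (mvec n Sg (fun k => u k + (-1) * s k))
    with (fun k => mvec n Sg u k + (-1) * mvec n Sg s k) in Hpsd
    by (apply functional_extensionality; intros; now rewrite mvec_lin).
  rewrite dot_lin_l, !dot_lin_r in Hpsd.
  assert (0 <= s2 * dot n t t) by (apply Rmult_le_pos; [lra | apply dot_nonneg]).
  rewrite dot_comm in Etw. fold t. nra.
Qed.

(** * The smallest eigenvalue bounds the Rayleigh quotient *)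

(* Sum of the absolute values of the entries: a crude operator-norm bound. *)
Definition absum (n : nat) (A : Mat) : R := sumR n (fun i => sumR n (fun j => Rabs (A i j))).

Lemma absum_nonneg (n : nat) (A : Mat) : 0 <= absum n A.
Proof. apply sumR_nonneg. intros. apply sumR_nonneg. intros. apply Rabs_pos. Qed.

Lemma quad_bound (n : nat) (A : Mat) (x : Vec) : Rabs (quad n A x) <= absum n A * dot n x x.
Proof.
  unfold quad, absum, mvec.
  rewrite (sumR_ext n _ (fun i => sumR n (fun j => A i j * (x i * x j)))).
  2:{ intros. rewrite <- sumR_scal. apply sumR_ext. intros; ring. }
  eapply Rle_trans; [apply Rabs_sumR|].
  rewrite Rmult_comm, <- sumR_scal. apply sumR_le. intros i hi.
  eapply Rle_trans; [apply Rabs_sumR|].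
  rewrite <- sumR_scal. apply sumR_le. intros j hj.
  rewrite Rabs_mult, (Rmult_comm (dot n x x)). apply Rmult_le_compat_l; [apply Rabs_pos|].
  (* |x_i x_j| <= (x_i^2 + x_j^2) / 2 <= |x|^2 *)
  assert (h1 := sq_le_dot n x i hi). assert (h2 := sq_le_dot n x j hj).
  rewrite Rabs_mult.
  assert (0 <= (Rabs (x i) - Rabs (x j)) * (Rabs (x i) - Rabs (x j))) by apply Rle_0_sqr.
  assert (Rabs (x i) * Rabs (x i) = x i * x i)
    by (rewrite <- Rabs_mult; apply Rabs_right, Rle_ge, Rle_0_sqr).
  assert (Rabs (x j) * Rabs (x j) = x j * x j)
    by (rewrite <- Rabs_mult; apply Rabs_right, Rle_ge, Rle_0_sqr).
  nra.
Qed.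

Lemma quad_upper (n : nat) (A : Mat) (x : Vec) : quad n A x <= absum n A * dot n x x.
Proof. eapply Rle_trans; [apply Rle_abs | apply quad_bound]. Qed.

Lemma quad_lower (n : nat) (A : Mat) (x : Vec) : - (absum n A * dot n x x) <= quad n A x.
Proof.
  assert (h := quad_bound n A x). rewrite <- Rabs_Ropp in h.
  generalize (Rle_abs (- quad n A x)). lra.
Qed.

(* Every square matrix P has a left inverse or a nonzero left null vector.
   This is the determinant dichotomy of MathComp, transported to matrices
   given as functions nat -> nat -> R. *)
Module DetDichotomy.
Import HB.structures mathcomp.boot.all_boot mathcomp.order.all_order.
Import mathcomp.algebra.all_algebra mathcomp.reals_stdlib.Rstruct GRing.Theory.

Lemma sumR_big (n : nat) (f : nat -> R) : sumR n f = (\sum_(i < n) f i)%R.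
Proof.
  elim: n => [|n IH]; first by rewrite big_ord0.
  by rewrite sumR_S big_ord_recr /= IH.
Qed.

Definition ext (n : nat) (F : 'I_n -> R) (k : nat) : R :=
  match (insub k : option 'I_n) with Some i => F i | None => 0%R end.
Arguments ext {n}.

Lemma extE (n : nat) (F : 'I_n -> R) (i : 'I_n) : ext F i = F i.
Proof. by rewrite /ext valK. Qed.
Arguments extE {n}.

Lemma left_inverse_or_left_kernel (n : nat) (P : Mat) :
  (exists Q : Mat, forall i j, (i < n)%coq_nat -> (j < n)%coq_nat ->
       sumR n (fun k => Q i k * P k j) = idm i j)
  \/ (exists v : Vec, nonzero_vec n v /\
       forall j, (j < n)%coq_nat -> sumR n (fun i => v i * P i j) = 0).
Proof.
  set A : 'M[R]_n := (\matrix_(i < n, j < n) P i j)%R.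
  case: (boolP (\det A == 0)%R) => hdet.
  - right. move: hdet => /det0P [v vnz vA].
    exists (ext (fun i => v ord0 i)). split.
    + case: (pickP (fun i => v ord0 i != 0%R)) => [i hi|h0].
      * exists (nat_of_ord i); split; first by apply/ssrnat.ltP; exact: ltn_ord.
        by rewrite extE; apply/eqP.
      * exfalso; move/negP: vnz; apply; apply/eqP/rowP => i.
        move: (h0 i) => /= /negbFE /eqP ->. by rewrite mxE.
    + move=> j /ssrnat.ltP hj. rewrite sumR_big.
      have := congr1 (fun M : 'rV_n => M ord0 (Ordinal hj)) vA.
      rewrite /= !mxE => e0. apply: (etrans _ e0). apply: eq_bigr => i _.
      by rewrite extE /A mxE.
  - left. have hu : A \in unitmx by rewrite unitmxE unitfE.
    exists (fun i j => ext (fun ii => ext (fun jj => invmx A ii jj) j) i).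
    move=> i j /ssrnat.ltP hi /ssrnat.ltP hj. rewrite sumR_big.
    have := congr1 (fun M : 'M_n => M (Ordinal hi) (Ordinal hj)) (mulVmx hu).
    rewrite /= !mxE => e.
    have -> : idm i j = ((Ordinal hi == Ordinal hj)%:R)%R.
      rewrite /idm /=. case: (Nat.eqb_spec i j) => eij; case: eqP => eo //.
      - by exfalso; apply: eo; apply: val_inj.
      - by exfalso; apply: eij; move: (congr1 val eo).
    rewrite -e. apply: eq_bigr => k _.
    by rewrite (extE _ (Ordinal hi)) extE !mxE.
Qed.

End DetDichotomy.

(* For symmetric positive semidefinite P:  |P x|^2 <= (absum P + 1) x^T P x.
   Expand 0 <= (x - s P x)^T P (x - s P x) with s = 1 / (absum P + 1). *)
Lemma psd_image_bound (n : nat) (P : Mat) (x : Vec) :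
  symmetric n P -> (forall y, 0 <= quad n P y) ->
  dot n (mvec n P x) (mvec n P x) <= (absum n P + 1) * quad n P x.
Proof.
  intros hsym hpsd. set (y := mvec n P x). set (c := absum n P + 1).
  assert (cpos : 0 < c) by (unfold c; generalize (absum_nonneg n P); lra).
  set (s := / c). assert (spos : 0 < s) by (apply Rinv_0_lt_compat; lra).
  assert (h := hpsd (fun k => x k + (- s) * y k)). rewrite quad_dot in h.
  rewrite (dot_ext n _ (fun k => x k + - s * y k) _ (fun k => y k + (-s) * mvec n P y k)) in h;
    auto; [|intros; apply mvec_lin].
  rewrite dot_lin_l, !dot_lin_r in h.
  assert (exy : dot n x (mvec n P y) = dot n y y) by (now rewrite dot_sym).
  assert (exy' : dot n x y = quad n P x) by reflexivity.
  rewrite exy, exy', <- quad_dot in h.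
  assert (sc : s * c = 1) by (unfold s; field; lra).
  assert (hy : quad n P y <= c * dot n y y).
  { generalize (quad_upper n P y) (dot_nonneg n y). unfold c. nra. }
  assert (s * s * quad n P y <= s * dot n y y).
  { replace (s * dot n y y) with (s * s * (c * dot n y y))
      by (transitivity ((s * c) * (s * dot n y y)); [ring | rewrite sc; ring]).
    apply Rmult_le_compat_l; nra. }
  apply Rmult_le_reg_l with s; auto. rewrite <- Rmult_assoc, sc. lra.
Qed.

Lemma left_inverse_bound (n : nat) (P Q : Mat) (x : Vec) :
  (forall i j, (i < n)%nat -> (j < n)%nat -> sumR n (fun k => Q i k * P k j) = idm i j) ->
  dot n x x <= (absum n (mmul n (trm Q) Q) + 1) * dot n (mvec n P x) (mvec n P x).
Proof.
  intros hQ. set (y := mvec n P x).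
  assert (ex : forall i, (i < n)%nat -> x i = mvec n Q y i).
  { intros i hi. unfold y. rewrite <- mvec_mmul, <- (mvec_idm n x i hi).
    apply mvec_ext; auto. intros a b ha hb. symmetry; now apply hQ. }
  rewrite (dot_ext n x (mvec n Q y) x (mvec n Q y)), dot_trm, dot_comm, <- mvec_mmul,
    <- quad_dot; auto.
  assert (hb := quad_upper n (mmul n (trm Q) Q) y). assert (0 <= dot n y y) by apply dot_nonneg.
  nra.
Qed.

Lemma invertible_psd_coercive (n : nat) (P Q : Mat) :
  symmetric n P -> (forall y, 0 <= quad n P y) ->
  (forall i j, (i < n)%nat -> (j < n)%nat -> sumR n (fun k => Q i k * P k j) = idm i j) ->
  exists c, 0 < c /\ forall x, c * dot n x x <= quad n P x.
Proof.
  intros hsym hpsd hQ.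
  set (cP := absum n P + 1). set (cQ := absum n (mmul n (trm Q) Q) + 1).
  assert (0 < cP) by (unfold cP; generalize (absum_nonneg n P); lra).
  assert (0 < cQ) by (unfold cQ; generalize (absum_nonneg n (mmul n (trm Q) Q)); lra).
  exists (/ (cQ * cP)). split; [apply Rinv_0_lt_compat; nra|]. intros x.
  assert (h1 := left_inverse_bound n P Q x hQ). assert (h2 := psd_image_bound n P x hsym hpsd).
  fold cP cQ in h1, h2.
  apply Rmult_le_reg_l with (cQ * cP); [nra|].
  rewrite <- Rmult_assoc, Rinv_r by nra. rewrite Rmult_1_l.
  assert (0 <= dot n (mvec n P x) (mvec n P x)) by apply dot_nonneg. nra.
Qed.

(* The best constant t with t |x|^2 <= x^T W x exists (completeness of R). *)
Lemma rayleigh_infimum (n : nat) (W : Mat) :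
  (0 < n)%nat ->
  exists m, (forall x, m * dot n x x <= quad n W x) /\
            (forall t, (forall x, t * dot n x x <= quad n W x) -> t <= m).
Proof.
  intros hn. set (T := fun t => forall x, t * dot n x x <= quad n W x).
  assert (Tne : T (- absum n W)) by (intros x; generalize (quad_lower n W x); lra).
  assert (Tb : bound T).
  { exists (W 0%nat 0%nat). intros t ht. specialize (ht (ev 0)).
    rewrite quad_dot, !dot_ev_l, mvec_ev, ev_diag in ht by auto. lra. }
  destruct (completeness T Tb (ex_intro _ _ Tne)) as [m [mub mlub]].
  exists m. split; [|exact mub].
  intros x. destruct (Rle_lt_dec (m * dot n x x) (quad n W x)) as [ok|bad]; auto.
  exfalso. assert (d0 := dot_nonneg n x).
  destruct (Req_dec (dot n x x) 0) as [e|ne].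
  { specialize (Tne x). rewrite e in Tne, bad. lra. }
  (* the Rayleigh quotient of x is an upper bound of T below m *)
  set (q := quad n W x / dot n x x).
  assert (q < m) by (apply Rmult_lt_reg_r with (dot n x x); unfold q; [lra | field_simplify; lra]).
  assert (is_upper_bound T q).
  { intros t ht. specialize (ht x). unfold q.
    apply Rmult_le_reg_r with (dot n x x); [lra | field_simplify; lra]. }
  specialize (mlub q H0). lra.
Qed.

(* The infimum m of the Rayleigh quotient is an
   eigenvalue: W - m I cannot be invertible (it would be coercive, pushing the
   infimum above m), so it has a null vector. *)
Lemma min_eigenvalue_rayleigh (n : nat) (W : Mat) (lam : R) :
  (0 < n)%nat -> symmetric n W -> is_min_eigenvalue n W lam ->
  forall x, lam * dot n x x <= quad n W x.
Proof.
  intros hn hsym [_ hmin].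
  destruct (rayleigh_infimum n W hn) as [m [hm hmax]].
  set (P := msub W (mscale m idm)).
  assert (mP : forall x i, (i < n)%nat -> mvec n P x i = mvec n W x i - m * x i).
  { intros x i hi. unfold P. now rewrite mvec_msub, mvec_scal_idm. }
  assert (qP : forall x, quad n P x = quad n W x - m * dot n x x).
  { intros x. rewrite !quad_dot, (dot_ext n x x _ (fun i => mvec n W x i + (-m) * x i)); auto.
    - rewrite dot_lin_r. ring.
    - intros; rewrite mP; auto; ring. }
  assert (Psym : symmetric n P).
  { intros i j hi hj. unfold P, msub, mscale, trm. rewrite (hsym i j), idm_sym by auto. reflexivity. }
  assert (Ppsd : forall x, 0 <= quad n P x) by (intros x; rewrite qP; specialize (hm x); lra).
  assert (lam_le_m : lam <= m).
  { destruct (DetDichotomy.left_inverse_or_left_kernel n P) as [[Q hQ] | [v [vnz hv]]].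
    - exfalso. destruct (invertible_psd_coercive n P Q Psym Ppsd hQ) as [c [cpos hc]].
      assert (m + c <= m); [|lra].
      apply hmax. intros x. specialize (hc x). rewrite qP in hc. lra.
    - apply hmin. exists v. split; auto. intros i hi.
      assert (mvec n (trm P) v i = 0) by (rewrite <- (hv i hi); apply sumR_ext; intros; unfold trm; ring).
      rewrite sym_trm, mP in H by auto. lra. }
  intros x. specialize (hm x). assert (0 <= dot n x x) by apply dot_nonneg. nra.
Qed.

(** * Diagonal of the inverse of (diagonal + positive semidefinite) *)

(* Throughout, x is the j-th column of (diag(a) + S)^{-1}:
     a_i x_i + (S x)_i = delta_ij  for all i < n,
   so that x_j is the j-th diagonal entry of the inverse. *)
Section DiagPlusPsdInverse.
Variables (n : nat) (a : nat -> R) (S : Mat) (x : Vec) (j : nat).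
Hypothesis hj : (j < n)%nat.
Hypothesis ha : forall i, (i < n)%nat -> 0 <= a i.
Hypothesis hS : forall z, 0 <= quad n S z.
Hypothesis hcol : forall i, (i < n)%nat -> a i * x i + mvec n S x i = ev j i.

Lemma diag_form_nonneg (z : Vec) : 0 <= dot n z (fun i => a i * z i).
Proof.
  apply sumR_nonneg. intros i hi.
  assert (0 <= a i) by auto. assert (0 <= z i * z i) by apply Rle_0_sqr. nra.
Qed.

Lemma column_diag_entry : x j = dot n x (fun i => a i * x i) + quad n S x.
Proof.
  rewrite quad_dot, <- (Rmult_1_l (dot n x (mvec n S x))), <- dot_lin_r, <- (dot_ev_r n j x hj).
  apply dot_ext; auto. intros; rewrite <- hcol; auto; ring.
Qed.

(* Upper bound: x_j >= a_j x_j^2, hence x_j <= 1 / a_j. *)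
Lemma inv_diag_upper : 0 < a j -> x j <= / a j.
Proof.
  intros haj. assert (E := column_diag_entry).
  assert (a j * (x j * x j) <= dot n x (fun i => a i * x i)).
  { replace (a j * (x j * x j)) with (x j * (a j * x j)) by ring.
    apply (sumR_single_le n (fun i => x i * (a i * x i)) j); auto.
    intros i hi. assert (0 <= a i) by auto. assert (0 <= x i * x i) by apply Rle_0_sqr. nra. }
  assert (0 <= quad n S x) by auto.
  destruct (Rle_dec (x j) 0).
  - assert (0 < / a j) by (apply Rinv_0_lt_compat; auto). lra.
  - apply Rmult_le_reg_l with (a j); auto. rewrite Rinv_r by lra. nra.
Qed.

(* Lower bound: with m = a_j + S_jj, positivity of the form
   (diag(a) + S) at e_j - t x gives m - 2 t + t^2 x_j >= 0 for all t;
   choosing t = 1 / x_j yields x_j >= 1 / m. *)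
Lemma inv_diag_lower : symmetric n S -> 0 < a j + S j j -> / (a j + S j j) <= x j.
Proof.
  intros hsym hm.
  set (F := fun z i => a i * z i + mvec n S z i).
  assert (Fpos : forall z, 0 <= dot n z (F z)).
  { intro z. unfold F.
    rewrite (dot_ext n z z _ (fun k => a k * z k + 1 * mvec n S z k)), dot_lin_r;
      auto; [|intros; ring].
    generalize (diag_form_nonneg z) (hS z). rewrite quad_dot. lra. }
  assert (Flin : forall z1 z2 c i, F (fun k => z1 k + c * z2 k) i = F z1 i + c * F z2 i).
  { intros. unfold F. rewrite mvec_lin. ring. }
  assert (x0 : 0 <= x j).
  { rewrite column_diag_entry. generalize (diag_form_nonneg x) (hS x). lra. }
  assert (Fej : dot n x (F (ev j)) = 1).
  { unfold F. rewrite (dot_ext n x x _ (fun k => a k * ev j k + 1 * mvec n S (ev j) k)),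
      dot_lin_r, (dot_sym n S), dot_ev_r; auto; [|intros; ring].
    assert (dot n x (fun i => a i * ev j i) = a j * x j).
    { unfold dot, ev. rewrite <- (sumR_delta_l n j (fun i => a i * x i)) by auto.
      apply sumR_ext. intros; ring. }
    rewrite H, Rmult_1_l, (hcol j hj). apply ev_diag. }
  assert (Fjj : F (ev j) j = a j + S j j) by (unfold F; rewrite mvec_ev, ev_diag by auto; ring).
  assert (Q : forall t, 0 <= a j + S j j - 2 * t + t * t * x j).
  { intro t. assert (h := Fpos (fun k => ev j k + (- t) * x k)).
    rewrite (dot_ext n _ (fun k => ev j k + (- t) * x k) _
               (fun k => F (ev j) k + (-t) * ev j k)) in h; auto.
    2:{ intros i hi. rewrite Flin. unfold F at 2. rewrite hcol; auto. }
    rewrite dot_lin_l, !dot_lin_r, dot_ev_l, dot_ev_l, dot_ev_r, Fjj, Fej, ev_diag in h by auto.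
    nra. }
  set (m := a j + S j j) in *.
  destruct (Req_dec (x j) 0) as [e|ne].
  - specialize (Q (m / 2 + 1)). rewrite e in Q. lra.
  - specialize (Q (/ x j)).
    replace (m - 2 * / x j + / x j * / x j * x j) with (m - / x j) in Q by (field; lra).
    apply Rmult_le_reg_l with m; auto. rewrite Rinv_r by lra.
    apply Rmult_le_reg_r with (/ x j); [apply Rinv_0_lt_compat; lra|].
    rewrite Rmult_assoc, Rinv_r by lra. lra.
Qed.

End DiagPlusPsdInverse.

(* If S >= lam I with lam > 0, the diagonal of S^{-1} lies in [0, 1/lam]:
   with y the j-th column of S^{-1}, y_j = y^T S y >= lam |y|^2 >= lam y_j^2. *)
Lemma inv_diag_le_of_coercive (n : nat) (S Sinv : Mat) (lam : R) (j : nat) :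
  (j < n)%nat -> 0 < lam -> (forall y, lam * dot n y y <= quad n S y) ->
  meq n n (mmul n S Sinv) idm -> 0 <= Sinv j j <= / lam.
Proof.
  intros hj hlam hcoer hinv. set (y := mvec n Sinv (ev j)).
  assert (yj : y j = Sinv j j) by (unfold y; rewrite mvec_ev; auto).
  assert (dy : quad n S y = y j).
  { rewrite quad_dot, <- (dot_ev_r n j y hj). apply dot_ext; auto.
    intros i hi. unfold y. now apply inv_col. }
  assert (h := hcoer y). assert (hsq := sq_le_dot n y j hj). rewrite dy in h.
  assert (h1 : lam * (y j * y j) <= y j) by nra.
  assert (h2 : 0 <= y j) by nra.
  rewrite <- yj. split; auto.
  destruct (Req_dec (y j) 0) as [e|ne].
  - rewrite e. apply Rlt_le, Rinv_0_lt_compat; auto.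
  - apply Rmult_le_reg_l with lam; auto. rewrite Rinv_r by lra.
    apply Rmult_le_reg_r with (y j); [lra | nra].
Qed.

(** * The Gaussian quantile: 1 <= Q^{-1}(delta) <= 9/2 *)

(* Explicit two-sided bounds for exp via (1 + y/256)^256 <= exp y. *)
Lemma exp_mono (x y : R) : x <= y -> exp x <= exp y.
Proof. intros h. destruct (Req_dec x y) as [->|ne]; [lra | apply Rlt_le, exp_increasing; lra]. Qed.

Lemma exp_pow_INR (x : R) (k : nat) : exp x ^ k = exp (INR k * x).
Proof.
  induction k as [|k IH]; [simpl; now rewrite Rmult_0_l, exp_0|].
  rewrite <- tech_pow_Rmult, IH, S_INR, <- exp_plus. f_equal. ring.
Qed.

Lemma exp_neg_lower (a : R) : 0 <= a <= 256 -> (1 - a / 256) ^ 256 <= exp (- a).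
Proof.
  intros h. replace (- a) with (INR 256 * (- a / 256)) by (simpl; field).
  rewrite <- exp_pow_INR. apply pow_incr. split; [lra|].
  generalize (exp_ineq1_le (- a / 256)). lra.
Qed.

Lemma exp_neg_upper (a : R) : 0 <= a -> exp (- a) <= / (1 + a / 256) ^ 256.
Proof.
  intros h. rewrite exp_Ropp. apply Rinv_le_contravar; [apply pow_lt; lra|].
  replace a with (INR 256 * (a / 256)) at 2 by (simpl; field).
  rewrite <- exp_pow_INR. apply pow_incr. split; [lra|].
  generalize (exp_ineq1_le (a / 256)). lra.
Qed.

Lemma sqrt2pi_pos : 0 < sqrt (2 * PI).
Proof. apply sqrt_lt_R0. generalize PI_RGT_0; lra. Qed.

Lemma sqrt2pi_upper : sqrt (2 * PI) <= 283 / 100.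
Proof. rewrite <- (sqrt_square (283 / 100)) by lra. apply sqrt_le_1_alt. generalize PI_4. lra. Qed.

Lemma sqrt2pi_lower : 2 <= sqrt (2 * PI).
Proof.
  apply Rle_trans with (sqrt (2 * 2)); [rewrite sqrt_square; lra|].
  apply sqrt_le_1_alt. generalize PI2_1. lra.
Qed.

Lemma gauss_ex_derive (x : R) : ex_derive gauss_pdf x.
Proof. unfold gauss_pdf. auto_derive. auto. Qed.

Lemma gauss_cont (x : R) : continuous gauss_pdf x.
Proof. apply (@ex_derive_continuous R_AbsRing R_NormedModule), gauss_ex_derive. Qed.

Lemma gauss_ex_RInt (a b : R) : ex_RInt gauss_pdf a b.
Proof. apply (@ex_RInt_continuous R_CompleteNormedModule). intros; apply gauss_cont. Qed.

Lemma gauss_Riemann_integrable (a b : R) : a <= b -> Riemann_integrable gauss_pdf a b.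
Proof.
  intros h. apply continuity_implies_RiemannInt; auto.
  intros x _. apply continuity_pt_filterlim. apply gauss_cont.
Qed.

Lemma gauss_pos (x : R) : 0 < gauss_pdf x.
Proof. apply Rmult_lt_0_compat; [apply Rinv_0_lt_compat, sqrt2pi_pos | apply exp_pos]. Qed.

Lemma gauss_decreasing (x y : R) : 0 <= x <= y -> gauss_pdf y <= gauss_pdf x.
Proof.
  intros h. apply Rmult_le_compat_l; [apply Rlt_le, Rinv_0_lt_compat, sqrt2pi_pos|].
  apply exp_mono. simpl. nra.
Qed.

Lemma gauss_lower (y : R) :
  0 <= y ^ 2 / 2 <= 256 -> (1 - (y ^ 2 / 2) / 256) ^ 256 * (100 / 283) <= gauss_pdf y.
Proof.
  intros h. unfold gauss_pdf. rewrite (Rmult_comm (/ sqrt (2 * PI))).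
  replace (- y ^ 2 / 2) with (- (y ^ 2 / 2)) by field.
  apply Rmult_le_compat; [apply pow_le; lra | lra | now apply exp_neg_lower |].
  replace (100 / 283) with (/ (283 / 100)) by field.
  apply Rinv_le_contravar; [apply sqrt2pi_pos | apply sqrt2pi_upper].
Qed.

Lemma gauss_upper (y : R) : 0 <= y ^ 2 / 2 -> gauss_pdf y <= / (1 + (y ^ 2 / 2) / 256) ^ 256 * (1 / 2).
Proof.
  intros h. unfold gauss_pdf. rewrite (Rmult_comm (/ sqrt (2 * PI))).
  replace (- y ^ 2 / 2) with (- (y ^ 2 / 2)) by field.
  apply Rmult_le_compat; [apply Rlt_le, exp_pos | apply Rlt_le, Rinv_0_lt_compat, sqrt2pi_pos
                          | now apply exp_neg_upper |].
  replace (1 / 2) with (/ 2) by field. apply Rinv_le_contravar; [lra | apply sqrt2pi_lower].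
Qed.

Lemma gauss_chasles (a b c : R) : RInt gauss_pdf a c = RInt gauss_pdf a b + RInt gauss_pdf b c.
Proof. symmetry. apply (@RInt_Chasles R_CompleteNormedModule); apply gauss_ex_RInt. Qed.

Lemma gauss_RInt_nonneg (a b : R) : a <= b -> 0 <= RInt gauss_pdf a b.
Proof. intros h. apply RInt_ge_0; auto; [apply gauss_ex_RInt | intros; apply Rlt_le, gauss_pos]. Qed.

(* On [a, b] with a >= 0 the density is at least its value at b. *)
Lemma gauss_RInt_lower (a b : R) : 0 <= a <= b -> (b - a) * gauss_pdf b <= RInt gauss_pdf a b.
Proof.
  intros h. replace ((b - a) * gauss_pdf b) with (RInt (fun _ => gauss_pdf b) a b)
    by now rewrite (@RInt_const R_CompleteNormedModule).
  apply RInt_le; [lra | apply (@ex_RInt_const R_CompleteNormedModule) | apply gauss_ex_RInt |].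
  intros x hx. apply gauss_decreasing. lra.
Qed.

(* Mills-type tail bound: int_c^b phi <= int_c^b (x/c) phi = (phi(c) - phi(b))/c. *)
Lemma gauss_RInt_tail (c b : R) : 0 < c <= b -> RInt gauss_pdf c b <= gauss_pdf c / c.
Proof.
  intros h.
  assert (dphi : forall x, ex_derive (fun x => x * gauss_pdf x / c) x)
    by (intros; unfold gauss_pdf; auto_derive; auto).
  assert (E : RInt (fun x => x * gauss_pdf x / c) c b = gauss_pdf c / c - gauss_pdf b / c).
  { apply (@is_RInt_unique R_CompleteNormedModule).
    replace (gauss_pdf c / c - gauss_pdf b / c) with (minus (- gauss_pdf b / c) (- gauss_pdf c / c))
      by (unfold minus, plus, opp; simpl; field; lra).
    apply (@is_RInt_derive R_CompleteNormedModule (fun x => - gauss_pdf x / c)).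
    - intros x hx. unfold gauss_pdf. auto_derive; auto.
      replace (- (x * (x * 1)) * / 2) with (- x ^ 2 / 2) by (simpl; field).
      field. split; [apply Rgt_not_eq, sqrt2pi_pos | lra].
    - intros x hx. apply (@ex_derive_continuous R_AbsRing R_NormedModule), dphi. }
  apply Rle_trans with (RInt (fun x => x * gauss_pdf x / c) c b).
  - apply RInt_le; [lra | apply gauss_ex_RInt | |].
    + apply (@ex_RInt_continuous R_CompleteNormedModule). intros.
      apply (@ex_derive_continuous R_AbsRing R_NormedModule), dphi.
    + intros x hx. assert (0 < gauss_pdf x) by apply gauss_pos.
      apply Rmult_le_reg_r with c; [lra|]. field_simplify; [nra | lra].
  - rewrite E. assert (0 < gauss_pdf b / c) by (apply Rdiv_lt_0_compat; [apply gauss_pos | lra]). lra.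
Qed.

(* Q(1) - Q(3) >= 0.105, by a lower Riemann sum with step 1/4. *)
Lemma gauss_mass_1_3 : 105 / 1000 <= RInt gauss_pdf 1 3.
Proof.
  rewrite (gauss_chasles 1 (5/4) 3), (gauss_chasles (5/4) (3/2) 3), (gauss_chasles (3/2) (7/4) 3),
    (gauss_chasles (7/4) 2 3), (gauss_chasles 2 (9/4) 3), (gauss_chasles (9/4) (5/2) 3),
    (gauss_chasles (5/2) (11/4) 3).
  generalize (gauss_RInt_lower 1 (5/4) ltac:(lra)) (gauss_RInt_lower (5/4) (3/2) ltac:(lra))
    (gauss_RInt_lower (3/2) (7/4) ltac:(lra)) (gauss_RInt_lower (7/4) 2 ltac:(lra))
    (gauss_RInt_lower 2 (9/4) ltac:(lra)) (gauss_RInt_lower (9/4) (5/2) ltac:(lra))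
    (gauss_RInt_lower (5/2) (11/4) ltac:(lra)) (gauss_RInt_lower (11/4) 3 ltac:(lra)).
  generalize (gauss_lower (5/4) ltac:(lra)) (gauss_lower (3/2) ltac:(lra))
    (gauss_lower (7/4) ltac:(lra)) (gauss_lower 2 ltac:(lra)) (gauss_lower (9/4) ltac:(lra))
    (gauss_lower (5/2) ltac:(lra)) (gauss_lower (11/4) ltac:(lra)) (gauss_lower 3 ltac:(lra)).
  lra.
Qed.

Lemma gauss_tail_9_2 (b : R) : 9/2 <= b -> RInt gauss_pdf (9/2) b <= 6 / 1000000.
Proof.
  intros hb. generalize (gauss_RInt_tail (9/2) b ltac:(lra)) (gauss_upper (9/2) ltac:(lra)). lra.
Qed.

(* delta <= 0.1 < Q(1) forces Q^{-1}(delta) >= 1. *)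
Lemma quantile_ge_1 (Kd delta : R) : Qtail Kd delta -> delta <= 1e-1 -> 1 <= Kd.
Proof.
  intros hQ hd. change (1e-1) with (1/10) in hd.
  destruct (Rle_lt_dec 1 Kd) as [ok|bad]; auto. exfalso.
  destruct (hQ (1/1000) ltac:(lra)) as [B hB].
  set (b := Rmax B 3). assert (B <= b) by apply Rmax_l. assert (3 <= b) by apply Rmax_r.
  specialize (hB b (gauss_Riemann_integrable Kd b ltac:(lra)) ltac:(auto)).
  rewrite <- RInt_Reals, (gauss_chasles Kd 1 b), (gauss_chasles 1 3 b) in hB.
  generalize (gauss_RInt_nonneg Kd 1 ltac:(lra)) (gauss_RInt_nonneg 3 b ltac:(lra)) gauss_mass_1_3
    (Rle_abs (RInt gauss_pdf Kd 1 + (RInt gauss_pdf 1 3 + RInt gauss_pdf 3 b) - delta)).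
  lra.
Qed.

(* delta >= 1e-5 > Q(9/2) forces Q^{-1}(delta) <= 9/2. *)
Lemma quantile_le_9_2 (Kd delta : R) : Qtail Kd delta -> 1e-5 <= delta -> Kd <= 9/2.
Proof.
  intros hQ hd. change (1e-5) with (1/100000) in hd.
  destruct (Rle_lt_dec Kd (9/2)) as [ok|bad]; auto. exfalso.
  destruct (hQ (1/1000000) ltac:(lra)) as [B hB].
  set (b := Rmax B (Kd + 1)). assert (B <= b) by apply Rmax_l. assert (Kd + 1 <= b) by apply Rmax_r.
  specialize (hB b (gauss_Riemann_integrable Kd b ltac:(lra)) ltac:(auto)).
  rewrite <- RInt_Reals in hB.
  generalize (gauss_chasles (9/2) Kd b) (gauss_RInt_nonneg (9/2) Kd ltac:(lra))
    (gauss_tail_9_2 b ltac:(lra)) (Rle_abs (- (RInt gauss_pdf Kd b - delta))).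
  rewrite Rabs_Ropp. lra.
Qed.

(** * Scalar inequalities on the noise level *)

(* sigma(eps) = Delta/(2 eps) (Kd + sqrt(Kd^2 + 2 eps)) is at most Delta eta
   as soon as eps >= (1 + sqrt(36 eta + 1))^2 / (8 eta^2), provided Kd <= 9/2:
   that condition gives 1 + 2 Kd eta <= 2 eps eta^2, i.e.
   sqrt(Kd^2 + 2 eps) <= 2 eps eta - Kd. *)
Lemma noise_level_upper (Delta eps Kd eta : R) :
  0 < Delta -> 0 < eps -> 1 <= Kd <= 9/2 -> 0 < eta ->
  / 8 * ((1 + sqrt (36 * eta + 1)) / eta) ^ 2 <= eps ->
  Delta / (2 * eps) * (Kd + sqrt (Kd ^ 2 + 2 * eps)) <= Delta * eta.
Proof.
  intros hD he hK heta hcond.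
  set (r := sqrt (36 * eta + 1)) in *.
  assert (rsq : r * r = 36 * eta + 1) by (apply sqrt_sqrt; lra).
  assert (r1 : 1 <= r).
  { apply Rle_trans with (sqrt 1); [rewrite sqrt_1; lra | apply sqrt_le_1_alt; lra]. }
  assert (c1 : (1 + r) * (1 + r) <= 8 * eta * eta * eps).
  { replace (/ 8 * ((1 + r) / eta) ^ 2) with ((1 + r) * (1 + r) / (8 * eta * eta)) in hcond
      by (field; lra).
    apply Rmult_le_reg_r with (/ (8 * eta * eta)); [apply Rinv_0_lt_compat; nra|].
    replace (8 * eta * eta * eps * / (8 * eta * eta)) with eps by (field; lra). lra. }
  assert (c2 : 1 + 2 * Kd * eta <= 2 * eta * eta * eps) by nra.
  set (s := sqrt (Kd ^ 2 + 2 * eps)).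
  assert (s0 : 0 <= s) by apply sqrt_pos.
  assert (ssq : s * s = Kd ^ 2 + 2 * eps) by (apply sqrt_sqrt; nra).
  set (t := 2 * eps * eta - Kd).
  assert (tp : 0 < t) by (unfold t; apply Rmult_lt_reg_r with eta; nra).
  assert (st : s <= t).
  { assert (s * s <= t * t); [|nra].
    unfold t. rewrite ssq. simpl.
    assert (1 <= 2 * eps * eta * eta - 2 * eta * Kd) by nra.
    assert (2 * eps <= 2 * eps * (2 * eps * eta * eta - 2 * eta * Kd)) by nra. nra. }
  apply Rmult_le_reg_l with (2 * eps); [lra|].
  replace (2 * eps * (Delta / (2 * eps) * (Kd + s))) with (Delta * (Kd + s)) by (field; lra).
  unfold t in st. nra.
Qed.

Lemma noise_level_lower (Delta eps Kd eta : R) :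
  0 < Delta -> 0 < eps -> 1 <= Kd -> 0 < eta -> eps <= / eta ->
  Delta * eta <= Delta / (2 * eps) * (Kd + sqrt (Kd ^ 2 + 2 * eps)).
Proof.
  intros hD he hK heta hcond.
  assert (c1 : eps * eta <= 1).
  { apply Rmult_le_reg_r with (/ eta); [apply Rinv_0_lt_compat; auto|].
    rewrite Rmult_assoc, Rinv_r by lra. lra. }
  set (s := sqrt (Kd ^ 2 + 2 * eps)).
  assert (ssq : s * s = Kd ^ 2 + 2 * eps) by (apply sqrt_sqrt; nra).
  assert (sK : Kd <= s) by (generalize (sqrt_pos (Kd ^ 2 + 2 * eps)); fold s; simpl in ssq; nra).
  apply Rmult_le_reg_l with (2 * eps); [lra|].
  replace (2 * eps * (Delta / (2 * eps) * (Kd + s))) with (Delta * (Kd + s)) by (field; lra).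
  nra.
Qed.

Lemma trace_budget_upper (nr Delta sigma Bu c : R) :
  0 < nr -> 0 < Delta -> 0 < Bu -> 0 < c -> 0 <= sigma ->
  sigma <= Delta * sqrt (Bu * c / (nr * Delta ^ 2)) -> nr * (sigma ^ 2 / c) <= Bu.
Proof.
  intros hn hD hBu hc hs hle.
  assert (X0 : 0 <= Bu * c / (nr * Delta ^ 2))
    by (apply Rlt_le, Rdiv_lt_0_compat; [nra | apply Rmult_lt_0_compat; [lra | apply pow_lt; lra]]).
  assert (sigma ^ 2 <= Delta ^ 2 * (Bu * c / (nr * Delta ^ 2))).
  { rewrite <- (sqrt_sqrt _ X0). set (q := sqrt (Bu * c / (nr * Delta ^ 2))) in *.
    assert (0 <= Delta * q - sigma) by lra. assert (0 <= Delta * q + sigma) by lra.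
    simpl. nra. }
  replace Bu with (nr * (Delta ^ 2 * (Bu * c / (nr * Delta ^ 2)) / c))
    by (field; repeat split; try apply pow_nonzero; lra).
  apply Rmult_le_compat_l; [lra|]. unfold Rdiv. apply Rmult_le_compat_r; auto.
  apply Rlt_le, Rinv_0_lt_compat; lra.
Qed.

Lemma trace_budget_lower (nr Delta sigma Bl c lam : R) :
  0 < Delta -> 0 < lam -> 0 < Bl -> Bl < nr * lam -> 0 < c ->
  Delta * sqrt (Bl * c / (Delta ^ 2 * (nr - Bl / lam))) <= sigma ->
  Bl <= nr * / (c / sigma ^ 2 + / lam).
Proof.
  intros hD hl hBl hBn hc hle.
  assert (hm : 0 < nr - Bl / lam).
  { apply Rmult_lt_reg_r with lam; auto. unfold Rdiv. field_simplify; lra. }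
  set (X := Bl * c / (Delta ^ 2 * (nr - Bl / lam))) in *.
  assert (Xp : 0 < X).
  { apply Rdiv_lt_0_compat; [nra|]. apply Rmult_lt_0_compat; [apply pow_lt|]; lra. }
  assert (e : 0 < sqrt X) by (apply sqrt_lt_R0; auto).
  assert (sp : 0 < sigma) by (generalize (Rmult_lt_0_compat _ _ hD e); lra).
  assert (h1 : Delta ^ 2 * X <= sigma ^ 2).
  { rewrite <- (sqrt_sqrt X) by lra. simpl.
    assert (Delta * sqrt X * (Delta * sqrt X) <= sigma * sigma) by (apply Rmult_le_compat; nra). nra. }
  assert (h2 : Bl * c <= sigma ^ 2 * (nr - Bl / lam)).
  { replace (Bl * c) with (Delta ^ 2 * X * (nr - Bl / lam))
      by (unfold X; field; repeat split; try apply pow_nonzero; lra).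
    apply Rmult_le_compat_r; lra. }
  assert (s2p : 0 < sigma ^ 2) by (apply pow_lt; lra).
  assert (dp : 0 < c / sigma ^ 2 + / lam).
  { generalize (Rdiv_lt_0_compat c (sigma ^ 2) hc s2p) (Rinv_0_lt_compat lam hl). lra. }
  apply Rmult_le_reg_r with (c / sigma ^ 2 + / lam); auto.
  rewrite Rmult_assoc, Rinv_l by lra.
  apply Rmult_le_reg_r with (sigma ^ 2); auto.
  replace (Bl * (c / sigma ^ 2 + / lam) * sigma ^ 2) with (Bl * c + sigma ^ 2 * (Bl / lam))
    by (field; lra).
  nra.
Qed.

(** * The posterior error covariance *)

Lemma diag_mvec (n : nat) (C : Mat) (z : Vec) (k : nat) :
  diagonal n C -> (k < n)%nat -> mvec n C z k = C k k * z k.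
Proof.
  intros hd hk. unfold mvec. rewrite <- (sumR_delta_l n k (fun l => C k l * z l) hk).
  apply sumR_ext. intros l hl. unfold idm. destruct (Nat.eqb_spec l k) as [->|ne]; [ring|].
  rewrite hd by auto. ring.
Qed.

Lemma scalar_inverse (n : nat) (s2 : R) (Vinv : Mat) :
  (0 < n)%nat -> 0 <= s2 -> is_inv n (mscale s2 idm) Vinv ->
  0 < s2 /\ forall y i, (i < n)%nat -> mvec n Vinv y i = / s2 * y i.
Proof.
  intros hn hs2 [h1 _].
  assert (E : forall i j, (i < n)%nat -> (j < n)%nat -> s2 * Vinv i j = idm i j).
  { intros i j hi hj. rewrite <- (h1 i j hi hj). unfold mmul, mscale.
    rewrite <- (sumR_delta_l n i (fun l => Vinv l j)), <- sumR_scal by auto.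
    apply sumR_ext. intros l hl. rewrite idm_sym. ring. }
  assert (s2 <> 0).
  { intro h0. specialize (E 0%nat 0%nat hn hn). rewrite h0 in E. unfold idm in E. simpl in E. lra. }
  split; [lra|]. intros y i hi. unfold mvec.
  rewrite <- (sumR_delta_l n i y hi), <- sumR_scal. apply sumR_ext. intros l hl.
  rewrite idm_sym, <- (E i l hi hl). field. auto.
Qed.

Lemma information_matrix_diag (n : nat) (C Vinv : Mat) (s2 : R) (z : Vec) (i : nat) :
  diagonal n C -> (forall y k, (k < n)%nat -> mvec n Vinv y k = / s2 * y k) -> (i < n)%nat ->
  mvec n (mmul n (mmul n (trm C) Vinv) C) z i = C i i ^ 2 / s2 * z i.
Proof.
  intros hd hv hi. assert (hdT : diagonal n (trm C)) by (intros a b ha hb ne; apply hd; auto).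
  rewrite !mvec_mmul, (diag_mvec n (trm C)), hv, diag_mvec by auto. unfold trm, Rdiv. ring.
Qed.

Lemma posterior_diag_bounds (n : nat) (C Vinv Sigma Sigmainv Sigmabar : Mat)
    (s2 lam cmin cmax : R) :
  diagonal n C -> 0 < cmin -> (forall i, (i < n)%nat -> cmin <= C i i ^ 2 <= cmax) ->
  0 < s2 -> (forall y k, (k < n)%nat -> mvec n Vinv y k = / s2 * y k) ->
  0 < lam -> psd n Sigma -> (forall y, lam * dot n y y <= quad n Sigma y) ->
  is_inv n Sigma Sigmainv ->
  is_inv n (madd (mmul n (mmul n (trm C) Vinv) C) Sigmainv) Sigmabar ->
  forall j, (j < n)%nat -> / (cmax / s2 + / lam) <= Sigmabar j j <= s2 / cmin.
Proof.
  intros hd hcmin hC hs2 hVinv hlam [hsym hpsd] hcoer [hSS _] [hbar _] j hj.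
  set (a := fun i => C i i ^ 2 / s2).
  assert (apos : forall i, (i < n)%nat -> cmin / s2 <= a i).
  { intros i hi. unfold a, Rdiv. apply Rmult_le_compat_r; [apply Rlt_le, Rinv_0_lt_compat; lra|].
    apply hC; auto. }
  assert (hcmin' : 0 < cmin / s2) by (apply Rdiv_lt_0_compat; lra).
  assert (ha : forall i, (i < n)%nat -> 0 <= a i) by (intros i hi; generalize (apos i hi); lra).
  assert (hSi : forall z, 0 <= quad n Sigmainv z) by (intro z; rewrite (quad_inv n Sigma); auto).
  assert (hcol : forall i, (i < n)%nat ->
            a i * mvec n Sigmabar (ev j) i + mvec n Sigmainv (mvec n Sigmabar (ev j)) i = ev j i).
  { intros i hi. rewrite <- (inv_col n _ Sigmabar j i hbar hi hj), mvec_madd.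
    now rewrite (information_matrix_diag n C Vinv s2). }
  rewrite <- (mvec_ev n Sigmabar j j hj). split.
  - assert (hSjj := inv_diag_le_of_coercive n Sigma Sigmainv lam j hj hlam hcoer hSS).
    assert (hj2 := hC j hj).
    eapply Rle_trans; [|apply (inv_diag_lower n a Sigmainv _ j hj ha hSi hcol)].
    + apply Rinv_le_contravar; [generalize (apos j hj); lra|].
      unfold a, Rdiv. apply Rplus_le_compat; [|lra].
      apply Rmult_le_compat_r; [apply Rlt_le, Rinv_0_lt_compat|]; lra.
    + now apply (sym_inv n Sigma).
    + generalize (apos j hj); lra.
  - eapply Rle_trans; [apply (inv_diag_upper n a Sigmainv _ j hj ha hSi hcol);
                        generalize (apos j hj); lra|].
    replace (s2 / cmin) with (/ (cmin / s2)) by (field; lra).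
    apply Rinv_le_contravar; auto.
Qed.

Lemma trace_le (n : nat) (A : Mat) (b : R) :
  (forall i, (i < n)%nat -> A i i <= b) -> trace n A <= INR n * b.
Proof. intros h. unfold trace. rewrite <- sumR_const. now apply sumR_le. Qed.

Lemma trace_ge (n : nat) (A : Mat) (b : R) :
  (forall i, (i < n)%nat -> b <= A i i) -> INR n * b <= trace n A.
Proof. intros h. unfold trace. rewrite <- sumR_const. now apply sumR_le. Qed.

Lemma privacy_upper_condition (nr Delta eps Kd sigma Bu c eta : R) :
  0 < nr -> 0 < Delta -> 0 < eps -> 1 <= Kd <= 9/2 -> 0 < Bu -> 0 < c ->
  sigma = Delta / (2 * eps) * (Kd + sqrt (Kd ^ 2 + 2 * eps)) ->
  eta = sqrt (Bu * c / (nr * Delta ^ 2)) ->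
  / 8 * ((1 + sqrt (36 * eta + 1)) / eta) ^ 2 <= eps ->
  nr * (sigma ^ 2 / c) <= Bu.
Proof.
  intros hn hD he hK hBu hc -> -> hcond.
  assert (0 < Bu * c / (nr * Delta ^ 2))
    by (apply Rdiv_lt_0_compat; [nra | apply Rmult_lt_0_compat; [| apply pow_lt]; lra]).
  apply (trace_budget_upper nr Delta); auto.
  - apply Rmult_le_pos; [apply Rlt_le, Rdiv_lt_0_compat |]; try lra.
    generalize (sqrt_pos (Kd ^ 2 + 2 * eps)). lra.
  - apply noise_level_upper; auto. now apply sqrt_lt_R0.
Qed.

Lemma privacy_lower_condition (nr Delta eps Kd sigma Bl c lam eta : R) :
  0 < Delta -> 0 < eps -> 1 <= Kd -> 0 < lam -> 0 < Bl -> Bl < nr * lam -> 0 < c ->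
  sigma = Delta / (2 * eps) * (Kd + sqrt (Kd ^ 2 + 2 * eps)) ->
  eta = sqrt (Bl * c / (Delta ^ 2 * (nr - Bl / lam))) ->
  eps <= / eta ->
  Bl <= nr * / (c / sigma ^ 2 + / lam).
Proof.
  intros hD he hK hl hBl hBn hc -> -> hcond.
  assert (0 < nr - Bl / lam) by (apply Rmult_lt_reg_r with lam; auto; unfold Rdiv; field_simplify; lra).
  apply (trace_budget_lower nr Delta); auto.
  apply noise_level_lower; auto. apply sqrt_lt_R0, Rdiv_lt_0_compat; [nra|].
  apply Rmult_lt_0_compat; [apply pow_lt|]; lra.
Qed.

Theorem theorem6
  (n m : nat) (H W D C : Mat)
  (hW : pd n W)
  (hWD : meq n n W (mmul m D (trm D)))
  (hCdiag : diagonal n C)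
  (hCnz : forall i, (i < n)%nat -> C i i <> 0)
  (hobs : observable n n H C)
  (hctrl : controllable n m H D)
  (Delta delta eps Kd : R)
  (hDelta : 0 < Delta)
  (hdelta : 1e-5 <= delta <= 1e-1)
  (heps : 0 < eps)
  (hKd : Qtail Kd delta)
  (sigma : R)
  (hsigma : sigma = Delta / (2 * eps) * (Kd + sqrt (Kd ^ 2 + 2 * eps)))
  (V Vinv Sigma Sigmainv Sigmabar : Mat)
  (hV : V = mscale (sigma ^ 2) idm)
  (hVinv : is_inv n V Vinv)
  (hSigma : psd n Sigma)
  (hRic : riccati_solution n H C V W Sigma)
  (hSinv : is_inv n Sigma Sigmainv)
  (hSbar : is_inv n (madd (mmul n (mmul n (trm C) Vinv) C) Sigmainv) Sigmabar)
  (lam : R) (hlam : is_min_eigenvalue n W lam)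
  (Cl Cu : R)
  (hCl : exists l, (l < n)%nat /\ Cl = C l l /\ forall i, (i < n)%nat -> Cl ^ 2 <= C i i ^ 2)
  (hCu : exists u, (u < n)%nat /\ Cu = C u u /\ forall i, (i < n)%nat -> C i i ^ 2 <= Cu ^ 2)
  (Bl Bu : R)
  (hBl : 0 < Bl < INR n * lam)
  (hBu : 0 < Bu)
  (eta2 eta4 : R)
  (heta2 : eta2 = sqrt (Bl * Cu ^ 2 / (Delta ^ 2 * (INR n - Bl / lam))))
  (heta4 : eta4 = sqrt (Bu * Cl ^ 2 / (INR n * Delta ^ 2))) :
  (/ 8 * ((1 + sqrt (36 * eta4 + 1)) / eta4) ^ 2 <= eps -> trace n Sigmabar <= Bu) /\
  (eps <= / eta2 -> Bl <= trace n Sigmabar).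
Proof.
  assert (hn : (0 < n)%nat) by (destruct n; [simpl in hBl; lra | lia]).
  assert (hnr : 0 < INR n) by now apply lt_0_INR.
  assert (hlam0 : 0 < lam) by nra.
  assert (hK : 1 <= Kd <= 9/2)
    by (split; [apply (quantile_ge_1 Kd delta) | apply (quantile_le_9_2 Kd delta)]; tauto).
  subst V. destruct (scalar_inverse n (sigma ^ 2) Vinv hn (pow2_ge_0 sigma) hVinv) as [hs2 hVs].
  (* Sigma >= W >= lam I *)
  assert (hcoer : forall y, lam * dot n y y <= quad n Sigma y).
  { intros y. eapply Rle_trans; [apply (min_eigenvalue_rayleigh n W lam hn (proj1 hW) hlam)|].
    apply (riccati_dominates_noise n H C (mscale (sigma ^ 2) idm) W Sigma (sigma ^ 2)); auto.
    apply pow2_ge_0. }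
  destruct hCl as [l [hl [eCl hCl]]], hCu as [u [hu [eCu hCu]]].
  assert (hCl2 : 0 < Cl ^ 2) by (rewrite eCl; apply pow2_gt_0, hCnz, hl).
  assert (hdiag := posterior_diag_bounds n C Vinv Sigma Sigmainv Sigmabar (sigma ^ 2) lam
                     (Cl ^ 2) (Cu ^ 2) hCdiag hCl2 (fun i hi => conj (hCl i hi) (hCu i hi))
                     hs2 hVs hlam0 hSigma hcoer hSinv hSbar).
  split; intros hcond.
  - eapply Rle_trans; [apply trace_le; intros i hi; apply (hdiag i hi)|].
    now apply (privacy_upper_condition (INR n) Delta eps Kd sigma Bu (Cl ^ 2) eta4).
  - eapply Rle_trans; [|apply trace_ge; intros i hi; apply (hdiag i hi)].
    apply (privacy_lower_condition (INR n) Delta eps Kd sigma Bl (Cu ^ 2) lam eta2); try tauto.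
    rewrite eCl in hCl2. generalize (hCu l hl). lra.
Qed.
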